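(* Let $\mathbf A\in\mathbb C^{n\times n}$ with $\operatorname{Ind}\mathbf A=1$ and $\operatorname{rank}\mathbf A^{2}=\operatorname{rank}\mathbf A=r\le n$. Then the group inverse $\mathbf A^{g}=(a^{g}_{ij})$ satisfies, for all $i,j=1,\dots,n$, \[a^{g}_{ij}=\frac{\sum_{\alpha\in I_{r,n}\{j\}}\left|\left(\mathbf A^{2}_{j.}(\mathbf a_{i.})\right)^{\alpha}_{\alpha}\right|}{\sum_{\alpha\in I_{r,n}}\left|(\mathbf A^{2})^{\alpha}_{\alpha}\right|} \quad\text{and}\quad a^{g}_{ij}=\frac{\sum_{\beta\in J_{r,n}\{i\}}\left|\left(\mathbf A^{2}_{.i}(\mathbf a_{.j})\right)^{\beta}_{\beta}\right|}{\sum_{\beta\in J_{r,n}}\left|(\mathbf A^{2})^{\beta}_{\beta}\right|},\] where $\mathbf a_{i.}$ and $\mathbf a_{.j}$ are the $i$-th row and $j$-th column of $\mathbf A$.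
   Context: $\operatorname{Ind}\mathbf A$ is the smallest nonnegative $k$ with $\operatorname{rank}\mathbf A^{k+1}=\operatorname{rank}\mathbf A^{k}$. The group inverse $\mathbf A^{g}$ is the unique $\mathbf X$ with $\mathbf A\mathbf X\mathbf A=\mathbf A$, $\mathbf X\mathbf A\mathbf X=\mathbf X$, $\mathbf A\mathbf X=\mathbf X\mathbf A$. $\mathbf M_{.i}(\mathbf c)$ (resp. $\mathbf M_{j.}(\mathbf c)$) is obtained by replacing the $i$-th column (resp. $j$-th row) of $\mathbf M$ by $\mathbf c$. For $1\le k\le n$, $L_{k,n}$ is the set of strictly increasing sequences of $k$ elements of $\{1,\dots,n\}$; $I_{k,n}=J_{k,n}=L_{k,n}$, $I_{k,n}\{i\}=J_{k,n}\{i\}=\{\alpha\in L_{k,n}:i\in\alpha\}$; $\mathbf M^{\alpha}_{\alpha}$ is the principal submatrix indexed by $\alpha$; $|\cdot|$ is the determinant. *)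

From HB Require Import structures.
From mathcomp Require Import all_boot all_order all_algebra.
From mathcomp Require Import complex.
From mathcomp Require Import reals.
Set Implicit Arguments. Unset Strict Implicit. Unset Printing Implicit Defensive.
Import Order.TTheory GRing.Theory Num.Theory.
Local Open Scope ring_scope.

Section Defs.
Variable F : fieldType.

Definition is_mx_index n (A : 'M[F]_n) (k : nat) : Prop :=
  \rank (A ^+ k.+1) = \rank (A ^+ k) /\
  (forall m : nat, (m < k)%N -> \rank (A ^+ m.+1) <> \rank (A ^+ m)).

Definition is_group_inverse n (A X : 'M[F]_n) : Prop :=
  [/\ A *m X *m A = A, X *m A *m X = X & A *m X = X *m A].

Definition row_repl n (M : 'M[F]_n) (j : 'I_n) (c : 'rV[F]_n) : 'M[F]_n :=
  \matrix_(k, l) if k == j then c 0 l else M k l.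

Definition col_repl n (M : 'M[F]_n) (i : 'I_n) (c : 'cV[F]_n) : 'M[F]_n :=
  \matrix_(k, l) if l == i then c k 0 else M k l.

Definition principal_minor n (M : 'M[F]_n) (alpha : {set 'I_n}) : F :=
  \det (\matrix_(k < #|alpha|, l < #|alpha|)
          M (enum_val k) (enum_val l)).
End Defs.

From HB Require Import structures.
From mathcomp Require Import all_boot all_order all_algebra all_fingroup.
From mathcomp Require Import zify ring.
From mathcomp Require Import complex reals.
Set Implicit Arguments. Unset Strict Implicit. Unset Printing Implicit Defensive.
Import Order.TTheory GRing.Theory Num.Theory.
Local Open Scope ring_scope.

(* Let E = A Ag, a projector of rank r, and G = A^2 + (1 - E), which is invertible
   with inverse Ag^2 + (1 - E), so that adj(G) A = A adj(G) = det(G) Ag.  Over F[X]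
   the matrix X + A^2 factors as V W = W V with V = X + (1 - X) E and W = X E + G;
   V fixes A on both sides and det V = X^(n-r) u with u(0) <> 0.  Hence det(X + A^2)
   and the entries of adj(X + A^2) A and A adj(X + A^2) are X^(n-r) u times det W
   and the entries of adj(W) A and A adj(W), and their coefficients of X^(n-r) are
   u(0) det G and u(0) det G Ag.  Expanding det(D + M), D diagonal, into principal
   minors of M identifies these coefficients with the sums in the statement; the
   numerators come from Laplace expansion along the replaced row or column. *)

Section PrincipalMinors.
Variables (R : comPzRingType) (n : nat).
Implicit Types (M : 'M[R]_n) (S : {set 'I_n}).

(* [principal_minor] over a commutative ring, e.g. over polynomials. *)
Definition pminor M S : R :=
  \det (\matrix_(k < #|S|, l < #|S|) M (enum_val k) (enum_val l)).

Definition pad_mx S M : 'M[R]_n :=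
  \matrix_(k, l) if k \in S then M k l else (k == l)%:R.

Lemma det_perm_conj (s : 'S_n) M : \det (\matrix_(i, j) M (s i) (s j)) = \det M.
Proof.
have -> : \matrix_(i, j) M (s i) (s j) = perm_mx s *m M *m perm_mx s^-1.
  by rewrite -row_permE -col_permE; apply/matrixP => i j; rewrite !mxE.
by rewrite !det_mulmx !det_perm odd_permV mulrC mulrA -signr_addb addbb mul1r.
Qed.

Lemma det_castmx m p (e : m = p) (B : 'M[R]_m) : \det (castmx (e, e) B) = \det B.
Proof. by case: p / e; rewrite castmx_id. Qed.

Definition enum_split S (x : 'I_(#|S| + #|~: S|)) : 'I_n :=
  match split x with inl a => enum_val a | inr b => enum_val b end.

Lemma enum_split_lshift S k : enum_split (lshift #|~: S| k) = enum_val k.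
Proof. by rewrite /enum_split (unsplitK (inl k : 'I_#|S| + 'I_#|~: S|)). Qed.

Lemma enum_split_rshift S k : enum_split (rshift #|S| k) = enum_val k.
Proof. by rewrite /enum_split (unsplitK (inr k : 'I_#|S| + 'I_#|~: S|)). Qed.

Lemma enum_split_inj S : injective (@enum_split S).
Proof.
move=> x y; rewrite -[x]splitK -[y]splitK.
case: (split x) => a; case: (split y) => b;
  rewrite ?enum_split_lshift ?enum_split_rshift => hab.
- by rewrite (enum_val_inj hab).
- by have := enum_valP a; rewrite hab; have := enum_valP b; rewrite inE => /negP.
- by have := enum_valP a; rewrite hab; have := enum_valP b; rewrite inE => + /negP.
- by rewrite (enum_val_inj hab).
Qed.

Lemma det_pad_mx S M : \det (pad_mx S M) = pminor M S.
Proof.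
have e : (#|S| + #|~: S| = n)%N by rewrite cardsC card_ord.
pose g (i : 'I_n) := enum_split (cast_ord (esym e) i).
have g_inj : injective g by move=> i j /enum_split_inj /cast_ord_inj.
rewrite -(det_perm_conj (perm g_inj)).
pose B := \matrix_(x, y) pad_mx S M (@enum_split S x) (@enum_split S y).
have -> : \matrix_(i, j) pad_mx S M (perm g_inj i) (perm g_inj j) = castmx (e, e) B.
  by apply/matrixP => i j; rewrite castmxE !mxE !permE.
rewrite det_castmx -[B]submxK.
have -> : dlsubmx B = 0.
  apply/matrixP => k l; rewrite !mxE enum_split_lshift enum_split_rshift.
  have := enum_valP k; rewrite inE => /negPf ->.
  case: eqP => // hkl; have := enum_valP k; have := enum_valP l.
  by rewrite -hkl inE => ->.
have -> : drsubmx B = 1%:M.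
  apply/matrixP => k l; rewrite !mxE !enum_split_rshift.
  have := enum_valP k; rewrite inE => /negPf ->.
  by rewrite (inj_eq enum_val_inj).
rewrite det_ublock det1 mulr1; congr (\det _); apply/matrixP => k l.
by rewrite !mxE !enum_split_lshift enum_valP.
Qed.

Lemma det_diag_add (d : 'I_n -> R) M :
  \det (diag_mx (\row_k d k) + M) = \sum_S (\prod_(k in ~: S) d k) * pminor M S.
Proof.
under [RHS]eq_bigr do rewrite -det_pad_mx /determinant big_distrr.
rewrite exchange_big /=; apply: eq_bigr => s _.
under eq_bigr do rewrite !mxE addrC.
rewrite bigA_distr big_distrr /=; apply: eq_bigr => S _.
rewrite mulrCA; congr (_ * _).
rewrite (bigID (mem S)) [X in _ = _ * X](bigID (mem S)) /=.
rewrite [X in _ = X * _](eq_bigl (fun i => i \notin S)); last by move=> i; rewrite inE.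
have -> : \prod_(i in S) pad_mx S M i (s i) = \prod_(i in S) M i (s i).
  by apply: eq_bigr => i iS; rewrite mxE iS.
have -> : \prod_(i | i \notin S) pad_mx S M i (s i) = \prod_(i | i \notin S) (i == s i)%:R.
  by apply: eq_bigr => i /negPf iS; rewrite mxE iS.
have -> : \prod_(i in S) (if i \in S then M i (s i) else d i *+ (i == s i)) =
          \prod_(i in S) M i (s i) by apply: eq_bigr => i ->.
have -> : \prod_(i | i \notin S) (if i \in S then M i (s i) else d i *+ (i == s i)) =
          \prod_(i | i \notin S) (d i * (i == s i)%:R).
  by apply: eq_bigr => i /negPf ->; rewrite mulr_natr.
by rewrite big_split /= mulrCA.
Qed.

Lemma pminorZ a M S : pminor (a *: M) S = a ^+ #|S| * pminor M S.
Proof. by rewrite /pminor -detZ; congr (\det _); apply/matrixP => k l; rewrite !mxE. Qed.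

End PrincipalMinors.

Lemma pminor_map (R R' : comPzRingType) (f : {rmorphism R -> R'}) n
    (M : 'M[R]_n) S : pminor (map_mx f M) S = f (pminor M S).
Proof.
by rewrite /pminor -det_map_mx; congr (\det _); apply/matrixP => k l; rewrite !mxE.
Qed.

Lemma pminor_rank (F : fieldType) n (M : 'M[F]_n) (S : {set 'I_n}) :
  (\rank M < #|S|)%N -> pminor M S = 0.
Proof.
move=> hlt; apply/eqP; apply: contraLR hlt; rewrite -leqNgt => hdet.
set N := \matrix_(k < #|S|, l < #|S|) M (enum_val k) (enum_val l).
have hu : N \in unitmx by rewrite unitmxE unitfE.
rewrite -(mxrank_unit hu).
have -> : N = rowsub enum_val (colsub enum_val M) by apply/matrixP => k l; rewrite !mxE.
apply: leq_trans (mxrankS (rowsub_sub _ _)) _.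
rewrite -mxrank_tr.
have -> : (colsub (enum_val : 'I_#|S| -> 'I_n) M)^T = rowsub enum_val M^T.
  by apply/matrixP => k l; rewrite !mxE.
by apply: leq_trans (mxrankS (rowsub_sub _ _)) _; rewrite mxrank_tr.
Qed.

Definition Xdiag_mx (R : comNzRingType) n (Z : {set 'I_n}) : 'M[{poly R}]_n :=
  diag_mx (\row_k (if k \in Z then 0 else 'X)).
Arguments Xdiag_mx {R n}.

Lemma Xdiag_mx0 (R : comNzRingType) n :
  Xdiag_mx (set0 : {set 'I_n}) = 'X%:M :> 'M[{poly R}]_n.
Proof. by apply/matrixP => i j; rewrite !mxE in_set0. Qed.

Lemma coef_det_Xdiag_add (R : comNzRingType) n (Z : {set 'I_n}) (M : 'M[R]_n) r :
  (r <= n)%N ->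
  (\det (Xdiag_mx Z + map_mx polyC M))`_(n - r) =
  \sum_(S : {set 'I_n} | (#|S| == r) && (Z \subset S)) pminor M S.
Proof.
move=> rn; rewrite det_diag_add coef_sum [RHS]big_mkcond; apply: eq_bigr => S _.
have cardS : (#|S| + #|~: S| = n)%N by rewrite cardsC card_ord.
rewrite pminor_map mulrC coefCM.
case: (boolP (Z \subset S)) => [ZS | /subsetPn[k kZ kS]]; last first.
  by rewrite (bigD1 k) ?inE //= kZ mul0r coef0 mulr0 andbF.
rewrite (eq_bigr (fun _ => 'X)); last first.
  by move=> k; rewrite inE => kS; case: ifP => // kZ; rewrite (subsetP ZS) in kS.
rewrite prodr_const coefXn andbT.
have -> : (n - r == #|~: S|)%N = (#|S| == r) by apply/eqP/eqP; lia.
by case: eqP; rewrite ?mulr1 ?mulr0.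
Qed.

Lemma dvdp_det_X_add (F : fieldType) n (c : {poly F}) (C : 'M[F]_n) :
  'X^(n - \rank C) %| \det ('X%:M + c *: map_mx polyC C).
Proof.
rewrite -Xdiag_mx0 det_diag_add.
apply: (big_ind (fun p => _ %| p)) => [|p q|S _]; [exact: dvdp0 | exact: dvdp_add |].
rewrite pminorZ pminor_map.
case: (leqP #|S| (\rank C)) => hS; last by rewrite pminor_rank // rmorph0 !mulr0 dvdp0.
rewrite (eq_bigr (fun _ => 'X)); last by move=> k; rewrite in_set0.
rewrite prodr_const dvdp_mulr // dvdp_exp2l //.
by have := cardsC S; rewrite card_ord; lia.
Qed.

Lemma adj_mulmx_entry (F : fieldType) n (B A : 'M[F]_n) i j :
  (\adj ('X%:M + map_mx polyC B) *m map_mx polyC A) i j =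
  \det (Xdiag_mx [set i] + map_mx polyC (col_repl B i (col j A))).
Proof.
rewrite (expand_det_col _ i) mxE; apply: eq_bigr => k _.
rewrite mulrC; congr (_ * _).
  by rewrite !mxE in_set1 eqxx /=; case: eqP => _; rewrite ?mulr0n add0r.
rewrite mxE /cofactor; congr (_ * _); congr (\det _); apply/matrixP => a b.
rewrite !mxE in_set1 [lift i b == i]eq_sym (negbTE (neq_lift i b)).
by case: eqP => // ->; rewrite eq_sym (negbTE (neq_lift i b)).
Qed.

Lemma mulmx_adj_entry (F : fieldType) n (B A : 'M[F]_n) i j :
  (map_mx polyC A *m \adj ('X%:M + map_mx polyC B)) i j =
  \det (Xdiag_mx [set j] + map_mx polyC (row_repl B j (row i A))).
Proof.
rewrite (expand_det_row _ j) mxE; apply: eq_bigr => k _.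
congr (_ * _).
  by rewrite !mxE in_set1 eqxx /=; case: eqP => _; rewrite ?mulr0n add0r.
rewrite mxE /cofactor; congr (_ * _); congr (\det _); apply/matrixP => a b.
by rewrite !mxE in_set1 [lift j a == j]eq_sym (negbTE (neq_lift j a)).
Qed.

Lemma adj_mulmx (R : idomainType) n (A B : 'M[R]_n) :
  \det (A *m B) != 0 -> \adj (A *m B) = \adj B *m \adj A.
Proof.
move=> dAB; apply: (scalemx_inj dAB).
rewrite -[RHS]mul_mx_scalar -(mul_mx_adj (A *m B)) !mulmxA -(mulmxA (\adj B)).
rewrite mul_adj_mx mul_mx_scalar -!scalemxAl mul_adj_mx mul_scalar_mx scalerA.
by rewrite det_mulmx mulrC.
Qed.

Lemma rank_compl_idempotent (F : fieldType) n (E : 'M[F]_n) :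
  E *m E = E -> (\rank (1%:M - E)%R <= n - \rank E)%N.
Proof.
move=> EE; rewrite -mxrank_ker; apply: mxrankS; apply/sub_kermxP.
by rewrite mulmxBl mul1mx EE subrr.
Qed.

Lemma det_idempotent_pencil (F : fieldType) n (E : 'M[F]_n) : E *m E = E ->
  exists2 u : {poly F},
    \det ('X%:M + (1 - 'X) *: map_mx polyC E) = 'X^(n - \rank E) * u & u`_0 != 0.
Proof.
move=> EE; set e := map_mx polyC E.
have ee : e *m e = e by rewrite -map_mxM EE.
have /dvdpP[u hu] := dvdp_det_X_add (1 - 'X) E.
have /dvdpP[u' hu'] := dvdp_det_X_add (1 - 'X) (1%:M - E).
exists u; first by rewrite hu mulrC.
have hVV' : ('X%:M + (1 - 'X) *: e) *m ('X%:M + (1 - 'X) *: map_mx polyC (1%:M - E))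
            = 'X%:M.
  rewrite map_mxB map_mx1 -/e.
  rewrite !(mulmxDl, mulmxDr) !mul_scalar_mx mul_mx_scalar -scalemxAl -scalemxAr.
  rewrite mulmxBr mulmx1 ee subrr.
  by apply/matrixP => i j; rewrite !mxE; ring.
(* X^r divides the determinant of the second factor of hVV', so comparing with X^n
   leaves u * u' * X^m = 1. *)
have := congr1 determinant hVV'; rewrite det_mulmx hu hu' det_scalar.
have := rank_compl_idempotent EE; set k := \rank (1%:M - E)%R => hk.
rewrite mulrACA -exprD.
have -> : (n - \rank E + (n - k) = n + (n - \rank E - k))%N.
  by have := rank_leq_row E; lia.
rewrite exprD mulrC -[RHS]mulr1 -mulrA.
have Xn0 : 'X^n != 0 :> {poly F} by rewrite expf_neq0 // polyX_eq0.
move/(mulfI Xn0).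
move/(congr1 (fun p : {poly F} => p`_0)); rewrite !coef0M coefC /=.
apply: contra_eqN => /eqP ->.
by rewrite mul0r mulr0 eq_sym oner_eq0.
Qed.

Section GroupInverse.
Variables (F : fieldType) (n : nat) (A Ag : 'M[F]_n).
Hypothesis hAg : is_group_inverse A Ag.

Let E := A *m Ag.

Let AAgA : A *m Ag *m A = A. Proof. by case: hAg. Qed.
Let AgAAg : Ag *m A *m Ag = Ag. Proof. by case: hAg. Qed.
Let AAg_comm : A *m Ag = Ag *m A. Proof. by case: hAg. Qed.

Let EE : E *m E = E. Proof. by rewrite /E mulmxA AAgA. Qed.
Let AE : A *m E = A. Proof. by rewrite /E AAg_comm mulmxA AAgA. Qed.
Let EAg : E *m Ag = Ag. Proof. by rewrite /E AAg_comm AgAAg. Qed.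
Let AgE : Ag *m E = Ag. Proof. by rewrite /E mulmxA AgAAg. Qed.

Let rank_E : \rank E = \rank A.
Proof. by apply/eqP; rewrite eqn_leq mxrankM_maxl -{1}AAgA mxrankM_maxl. Qed.

Let G := A *m A + (1%:M - E).
Let H := Ag *m Ag + (1%:M - E).

Let GH : G *m H = 1%:M.
Proof.
have e1 : A *m A *m (Ag *m Ag) = E by rewrite -mulmxA (mulmxA A Ag) -/E EAg.
have e2 : A *m A *m E = A *m A by rewrite -mulmxA AE.
have e3 : E *m (Ag *m Ag) = Ag *m Ag by rewrite mulmxA EAg.
rewrite /G /H !(mulmxDl, mulmxDr) !(mulmxN, mulNmx, mulmx1, mul1mx) e1 e2 e3 EE.
by apply/matrixP => i j; rewrite !mxE; ring.
Qed.

Let HA : H *m A = Ag.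
Proof.
rewrite /H !(mulmxDl, mulNmx, mul1mx) -mulmxA -AAg_comm -/E AgE.
by rewrite [E *m A]AAgA subrr addr0.
Qed.

Let AH : A *m H = Ag.
Proof. by rewrite /H !(mulmxDr, mulmxN, mulmx1) AE mulmxA -/E EAg subrr addr0. Qed.

Let adj_G : \adj G = \det G *: H.
Proof. by rewrite -[\adj G]mulmx1 -GH mulmxA mul_adj_mx mul_scalar_mx. Qed.

Let det_G_neq0 : \det G != 0.
Proof.
apply/eqP => dG0; have := congr1 determinant GH.
by rewrite det_mulmx dG0 mul0r det1 => /eqP; rewrite eq_sym oner_eq0.
Qed.

Let e := map_mx polyC E.
Let a := map_mx polyC A.
Let V := 'X%:M + (1 - 'X) *: e.
Let W := 'X *: e + map_mx polyC G.

Let ee : e *m e = e. Proof. by rewrite -map_mxM EE. Qed.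
Let ea : e *m a = a. Proof. by rewrite -map_mxM [E *m A]AAgA. Qed.
Let ae : a *m e = a. Proof. by rewrite -map_mxM AE. Qed.

Let VW : 'X%:M + map_mx polyC (A *m A) = V *m W.
Proof.
rewrite /V /W /G map_mxD map_mxB map_mx1 -/e map_mxM -/a.
rewrite !(mulmxDl, mulmxDr, mulmxN) !mul_scalar_mx -!scalemxAl -!scalemxAr.
rewrite !(mulmx1, ee, mulmxA e a, ea).
by apply/matrixP => i j; rewrite !mxE; ring.
Qed.

Let WV : 'X%:M + map_mx polyC (A *m A) = W *m V.
Proof.
rewrite /V /W /G map_mxD map_mxB map_mx1 -/e map_mxM -/a.
rewrite !(mulmxDl, mulmxDr, mulNmx) !mul_mx_scalar -!scalemxAl -!scalemxAr.
rewrite -mulmxA ae ee !mul1mx.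
by apply/matrixP => i j; rewrite !mxE; ring.
Qed.

Let Va : V *m a = a.
Proof.
rewrite /V mulmxDl mul_scalar_mx -scalemxAl ea.
by apply/matrixP => i j; rewrite !mxE; ring.
Qed.

Let aV : a *m V = a.
Proof.
rewrite /V mulmxDr mul_mx_scalar -scalemxAr ae.
by apply/matrixP => i j; rewrite !mxE; ring.
Qed.

Let W_at0 : map_mx (horner_eval 0) W = G.
Proof.
apply/matrixP => i j.
by rewrite !mxE !horner_evalE hornerD hornerM hornerX hornerC mul0r add0r.
Qed.

Lemma coef_adj_group_inverse :
  let P := 'X%:M + map_mx polyC (A *m A) in
  exists2 c : F, c != 0 &
  [/\ (\det P)`_(n - \rank A) = c,
      forall i j, ((\adj P *m map_mx polyC A) i j)`_(n - \rank A) = c * Ag i j &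
      forall i j, ((map_mx polyC A *m \adj P) i j)`_(n - \rank A) = c * Ag i j].
Proof.
move=> P; rewrite -/a -rank_E.
have [u hu u0] := det_idempotent_pencil EE; rewrite -/e -/V in hu.
set k := (n - \rank E)%N in hu *.
have coefXk q : ('X^k * q)`_k = q`_0 by rewrite coefXnM ltnn subnn.
have eval0 (M : 'M[{poly F}]_n) i j : (M i j)`_0 = map_mx (horner_eval 0) M i j.
  by rewrite mxE horner_evalE horner_coef0.
have eval0_a : map_mx (horner_eval 0) a = A.
  by apply/matrixP => i j; rewrite !mxE horner_evalE hornerC.
have dW0 : (\det W)`_0 = \det G by rewrite -horner_coef0 -horner_evalE -det_map_mx W_at0.
have dP : \det P = 'X^k * (u * \det W) by rewrite /P VW det_mulmx hu mulrA.
have dPn0 : \det P != 0.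
  rewrite dP !mulf_neq0 ?expf_neq0 ?polyX_eq0 //.
  - by apply: contraNneq u0 => ->; rewrite coef0.
  - by apply: contraNneq det_G_neq0 => dW; rewrite -dW0 dW coef0.
have adjV_a : \adj V *m a = \det V *: a by rewrite -{1}Va mulmxA mul_adj_mx mul_scalar_mx.
have a_adjV : a *m \adj V = \det V *: a by rewrite -{1}aV -mulmxA mul_mx_adj mul_mx_scalar.
exists (u`_0 * \det G); first by rewrite mulf_neq0.
split=> [|i j|i j].
- by rewrite dP coefXk coef0M dW0.
- rewrite /P VW adj_mulmx -?VW // -mulmxA adjV_a -scalemxAr mxE hu -mulrA coefXk.
  rewrite coef0M eval0 map_mxM map_mx_adj W_at0 eval0_a adj_G -scalemxAl HA mxE.
  by rewrite mulrA.
- rewrite /P WV adj_mulmx -?WV // mulmxA a_adjV -scalemxAl mxE hu -mulrA coefXk.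
  rewrite coef0M eval0 map_mxM map_mx_adj W_at0 eval0_a adj_G -scalemxAr AH mxE.
  by rewrite mulrA.
Qed.

End GroupInverse.

Theorem corollary2p4 (R : realType) (n r : nat) (A Ag : 'M[complex R]_n)
    (hind : is_mx_index A 1)
    (hr2 : \rank (A ^+ 2) = r) (hr : \rank A = r) (hrn : (r <= n)%N)
    (hAg : is_group_inverse A Ag) :
  forall i j : 'I_n,
    Ag i j =
      (\sum_(alpha : {set 'I_n} | (#|alpha| == r) && (j \in alpha))
          principal_minor (row_repl (A ^+ 2) j (row i A)) alpha)
      / (\sum_(alpha : {set 'I_n} | #|alpha| == r)
          principal_minor (A ^+ 2) alpha)
    /\
    Ag i j =
      (\sum_(beta : {set 'I_n} | (#|beta| == r) && (i \in beta))
          principal_minor (col_repl (A ^+ 2) i (col j A)) beta)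
      / (\sum_(beta : {set 'I_n} | #|beta| == r)
          principal_minor (A ^+ 2) beta).
Proof.
(* The hypotheses on the index and on the rank of A ^+ 2 are implied by hAg. *)
move=> i j; have [c c_neq0 [coef_det coef_adjA coef_Aadj]] := coef_adj_group_inverse hAg.
rewrite hr in coef_det coef_adjA coef_Aadj.
have -> : A ^+ 2 = A *m A by rewrite expr2 mulmxE.
have -> : \sum_(S : {set 'I_n} | #|S| == r) principal_minor (A *m A) S = c.
  rewrite -coef_det -Xdiag_mx0 coef_det_Xdiag_add //.
  by apply: eq_bigl => S; rewrite sub0set andbT.
have -> : \sum_(S : {set 'I_n} | (#|S| == r) && (j \in S))
            principal_minor (row_repl (A *m A) j (row i A)) S = c * Ag i j.
  rewrite -coef_Aadj mulmx_adj_entry coef_det_Xdiag_add //.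
  by apply: eq_bigl => S; rewrite sub1set.
have -> : \sum_(S : {set 'I_n} | (#|S| == r) && (i \in S))
            principal_minor (col_repl (A *m A) i (col j A)) S = c * Ag i j.
  rewrite -coef_adjA adj_mulmx_entry coef_det_Xdiag_add //.
  by apply: eq_bigl => S; rewrite sub1set.
by rewrite [c * _]mulrC mulfK.
Qed.
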